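(* Let $(I_t)_{t\ge0}$ be a nested interval-partition with comb metric $d_I$. There exist a countable set $F$ disjoint from $[0,1]$ and a pseudo-ultrametric $\bar d_I$ on $[0,1]\cup F$ extending $d_I$ such that the backbone associated with $([0,1]\cup F,\bar d_I)$, endowed with the Lebesgue measure on $\mathscr I$ extended by zero mass on $F$, is a complete metric space.
   Context: A nested interval-partition is a càdlàg (for the Hausdorff distance between complements) map $t\mapsto I_t$, $t\ge0$, into open subsets of $(0,1)$ with $I_s\subseteq I_t$ for $s\le t$. $f_I(x)=\inf\{t\ge0:x\in I_t\}$ and $d_I(x,y)=\mathbf 1_{\{x\ne y\}}\sup_{[x\wedge y,x\vee y]}f_I$. With $(I^0_i)$ the interval components of $I_0$, $\mathscr I=\{A\cup\bigcup_{i\in M}I^0_i:A\in\mathscr B([0,1]\setminus I_0),M\subseteq\mathbb N\}$. Backbone of a space $(U,d)$ with probability measure $\mu$ (defined on a $\sigma$-field containing the open balls $B(x,t)=\{y:d(x,y)<t\}$): on $U\times\mathbb R_+$ let $d_T((x,s),(y,t))=\max(d(x,y)-\frac{s+t}2,\frac{|t-s|}2)$, $T$ the quotient by $d_T=0$, $f(x)=\inf\{t\ge0:\mu(B(x,t))>0\}$, and the backbone is $\mathcal S=\{(x,t)\in T:t\ge f(x)\}$ with the restriction of $d_T$. *)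

From Stdlib Require Import Reals Lra ClassicalEpsilon.
Open Scope R_scope.

Inductive ereal : Type := Fin (x : R) | PInf.

Definition ele (a b : ereal) : Prop :=
  match a, b with
  | _, PInf => True
  | PInf, Fin _ => False
  | Fin x, Fin y => x <= y
  end.

Definition elt (a b : ereal) : Prop :=
  match a, b with
  | Fin x, Fin y => x < y
  | Fin _, PInf => True
  | PInf, _ => False
  end.

Definition emax (a b : ereal) : ereal :=
  match a, b with
  | Fin x, Fin y => Fin (Rmax x y)
  | _, _ => PInf
  end.

Definition esubr (a : ereal) (c : R) : ereal :=
  match a with Fin x => Fin (x - c) | PInf => PInf end.

(** infimum in [R ∪ {+∞}] of a set of reals bounded below (inf ∅ = +∞) *)
Definition is_einf (P : R -> Prop) (m : ereal) : Prop :=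
  (forall t, P t -> ele m (Fin t)) /\
  (forall u, (forall t, P t -> ele u (Fin t)) -> ele u m).
Definition einf (P : R -> Prop) : ereal :=
  epsilon (inhabits PInf) (is_einf P).

Definition is_esup (P : ereal -> Prop) (s : ereal) : Prop :=
  (forall v, P v -> ele v s) /\
  (forall u, (forall v, P v -> ele v u) -> ele s u).
Definition esup (P : ereal -> Prop) : ereal :=
  epsilon (inhabits PInf) (is_esup P).

Definition open_set (O : R -> Prop) : Prop :=
  forall x, O x -> exists eps, 0 < eps /\ forall y, Rabs (y - x) < eps -> O y.

Definition closed_set (C : R -> Prop) : Prop := open_set (fun x => ~ C x).

Definition compl01 (O : R -> Prop) : R -> Prop := fun x => 0 <= x <= 1 /\ ~ O x.

Definition hausdorff_le (A B : R -> Prop) (eps : R) : Prop :=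
  (forall a, A a -> exists b, B b /\ Rabs (a - b) <= eps) /\
  (forall b, B b -> exists a, A a /\ Rabs (a - b) <= eps).

Definition nested_interval_partition (I : R -> R -> Prop) : Prop :=
  (forall t, 0 <= t -> open_set (I t) /\ forall x, I t x -> 0 < x < 1) /\
  (forall s t, 0 <= s -> s <= t -> forall x, I s x -> I t x) /\
  (forall t, 0 <= t -> forall eps, 0 < eps -> exists delta, 0 < delta /\
     forall s, t <= s < t + delta ->
       hausdorff_le (compl01 (I s)) (compl01 (I t)) eps) /\
  (* left limits exist (in the space of nonempty compact subsets of [0,1]) *)
  (forall t, 0 < t -> exists L : R -> Prop,
     closed_set L /\ (exists z, L z) /\ (forall z, L z -> 0 <= z <= 1) /\
     forall eps, 0 < eps -> exists delta, 0 < delta /\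
       forall s, 0 <= s -> t - delta < s < t ->
         hausdorff_le (compl01 (I s)) L eps).

Definition fI (I : R -> R -> Prop) (x : R) : ereal :=
  einf (fun t => 0 <= t /\ I t x).

Definition dI (I : R -> R -> Prop) (x y : R) : ereal :=
  if Req_EM_T x y then Fin 0
  else esup (fun v => exists z, Rmin x y <= z <= Rmax x y /\ v = fI I z).

Inductive borel : (R -> Prop) -> Prop :=
| borel_interval a b : borel (fun x => a < x < b)
| borel_compl A : borel A -> borel (fun x => ~ A x)
| borel_union (A : nat -> R -> Prop) :
    (forall n, borel (A n)) -> borel (fun x => exists n, A n x)
| borel_ext A B : (forall x, A x <-> B x) -> borel A -> borel B.

Definition is_component (O : R -> Prop) (a b : R) : Prop :=
  a < b /\ (forall x, a < x < b -> O x) /\ ~ O a /\ ~ O b.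

Definition in_scrI (I : R -> R -> Prop) (S : R -> Prop) : Prop :=
  exists (A : R -> Prop) (M : R -> R -> Prop),
    borel A /\ (forall x, A x -> 0 <= x <= 1 /\ ~ I 0 x) /\
    (forall a b, M a b -> is_component (I 0) a b) /\
    forall x, S x <-> (A x \/ exists a b, M a b /\ a < x < b).

(** * Lebesgue null sets (a set has positive Lebesgue measure iff it is not null) *)
Definition lebesgue_null (A : R -> Prop) : Prop :=
  forall eps, 0 < eps -> exists a b : nat -> R,
    (forall n, a n <= b n) /\
    (forall x, A x -> exists n, a n < x < b n) /\
    (forall N, sum_f_R0 (fun n => b n - a n) N <= eps).

Definition unit01 : Type := {x : R | 0 <= x <= 1}.
Definition U (F : Type) : Type := (unit01 + F)%type.

Definition pseudo_ultrametric {X : Type} (d : X -> X -> ereal) : Prop :=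
  (forall x, d x x = Fin 0) /\
  (forall x y, d x y = d y x) /\
  (forall x y, ele (Fin 0) (d x y)) /\
  (forall x y z, ele (d x z) (emax (d x y) (d y z))).

Definition ball {X : Type} (d : X -> X -> ereal) (x : X) (t : R) : X -> Prop :=
  fun y => elt (d x y) (Fin t).

Definition trace01 {F : Type} (S : U F -> Prop) : R -> Prop :=
  fun r => exists h : 0 <= r <= 1, S (inl (exist _ r h)).

(** μ(S) > 0 for μ = Lebesgue measure on [0,1] extended by zero mass on F *)
Definition mu_pos {F : Type} (S : U F -> Prop) : Prop :=
  ~ lebesgue_null (trace01 S).

Definition dT {X : Type} (d : X -> X -> ereal) (p q : X * R) : ereal :=
  emax (esubr (d (fst p) (fst q)) ((snd p + snd q) / 2))
       (Fin (Rabs (snd q - snd p) / 2)).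

Definition fbb {F : Type} (d : U F -> U F -> ereal) (x : U F) : ereal :=
  einf (fun t => 0 <= t /\ mu_pos (ball d x t)).

Definition in_backbone {F : Type} (d : U F -> U F -> ereal) (p : U F * R) : Prop :=
  0 <= snd p /\ ele (fbb d (fst p)) (Fin (snd p)).

(** completeness of (𝒮, d_T); the quotient by d_T = 0 is complete iff the
    pseudometric space of representatives is complete *)
Definition backbone_complete {F : Type} (d : U F -> U F -> ereal) : Prop :=
  forall p : nat -> U F * R,
    (forall n, in_backbone d (p n)) ->
    (forall eps, 0 < eps -> exists N, forall m n, (N <= m)%nat -> (N <= n)%nat ->
       elt (dT d (p m) (p n)) (Fin eps)) ->
    exists q, in_backbone d q /\
      forall eps, 0 < eps -> exists N, forall n, (N <= n)%nat ->
        elt (dT d (p n) q) (Fin eps).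

(** Split every real [x] of [0,1] at which [f_I] jumps down on one side into
    [x] itself and an added point [(x, ±1)] infinitesimally to that side. On the
    lexicographically ordered line so obtained, the supremum of [f_I] over the
    reals between two points is a pseudo-ultrametric extending [d_I]. The added
    points are countable: each carries a rational code (a level separating the
    jump and a rational bounding the one-sided neighbourhood). Balls are
    order-convex and swallow the components of [I_0] they meet, where [f_I = 0],
    so they lie in [𝓘].

    Completeness of the backbone reduces to: a sequence whose mutual distances
    are eventually below every level [t > s] converges at every such level. Its
    limit sits at the supremum [L] of the reals eventually lying below it. If
    the sequence does not approach [L] itself at some level, it stays on one
    side of [L], and the reals on that side near [L] have [f_I] below the jump
    of [f_I] at [L]: precisely the situation in which an added point beside [L]
    was created, and that point is the limit. *)

From Pilot Require Import Defs.
From Stdlib Require Import Reals.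
Open Scope R_scope.
From Stdlib Require Import ZArith Lra Lia Cantor ClassicalEpsilon
  FunctionalExtensionality PropExtensionality.

Lemma ele_refl a : ele a a.
Proof. destruct a; simpl; lra. Qed.

Lemma ele_trans a b c : ele a b -> ele b c -> ele a c.
Proof. destruct a, b, c; simpl; tauto || lra. Qed.

Lemma elt_ele a b : elt a b -> ele a b.
Proof. destruct a, b; simpl; tauto || lra. Qed.

Lemma elt_irrefl a : ~ elt a a.
Proof. destruct a; simpl; lra. Qed.

Lemma ele_elt_trans a b c : ele a b -> elt b c -> elt a c.
Proof. destruct a, b, c; simpl; tauto || lra. Qed.

Lemma elt_ele_trans a b c : elt a b -> ele b c -> elt a c.
Proof. destruct a, b, c; simpl; tauto || lra. Qed.

Lemma not_elt a b : ~ elt a b -> ele b a.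
Proof. destruct a, b; simpl; tauto || lra. Qed.

Lemma emax_ge_l a b : ele a (emax a b).
Proof. destruct a, b; simpl; auto using Rmax_l. Qed.

Lemma emax_ge_r a b : ele b (emax a b).
Proof. destruct a, b; simpl; auto using Rmax_r. Qed.

Lemma emax_lt a b c : elt a c -> elt b c -> elt (emax a b) c.
Proof. destruct a, b, c; simpl; auto using Rmax_lub_lt. Qed.

Lemma glb_exists (E : R -> Prop) :
  (exists m, forall x, E x -> m <= x) -> (exists x, E x) ->
  exists l, (forall x, E x -> l <= x) /\ (forall b, (forall x, E x -> b <= x) -> b <= l).
Proof.
  intros [m Hm] [x0 Hx0].
  destruct (completeness (fun y => E (- y))) as [u [Hub Hleast]].
  - exists (- m). intros y Hy. specialize (Hm _ Hy). lra.
  - exists (- x0). rewrite Ropp_involutive. exact Hx0.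
  - exists (- u). split.
    + intros x Hx. enough (- x <= u) by lra. apply Hub. rewrite Ropp_involutive. exact Hx.
    + intros b Hb. enough (u <= - b) by lra.
      apply Hleast. intros y Hy. specialize (Hb _ Hy). lra.
Qed.

Lemma esup_spec (P : ereal -> Prop) : (exists v, P v) -> is_esup P (esup P).
Proof.
  intros [v0 Hv0]. unfold esup. apply epsilon_spec.
  destruct (classic (exists M, forall v, P v -> ele v (Fin M))) as [[M HM]|HnM].
  - destruct (completeness (fun x => P (Fin x))) as [m [Hub Hleast]].
    + exists M. intros x Hx. exact (HM _ Hx).
    + destruct v0 as [x|]; [exists x; exact Hv0|]. destruct (HM _ Hv0).
    + exists (Fin m). split.
      * intros [x|] Hx; simpl; [exact (Hub _ Hx)|exact (HM _ Hx)].
      * intros [b|] Hu; simpl; auto. apply Hleast. intros x Hx. exact (Hu _ Hx).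
  - exists PInf. split.
    + intros [] _; exact I.
    + intros [b|] Hu; simpl; auto. apply HnM. exists b; exact Hu.
Qed.

Lemma esup_ub (P : ereal -> Prop) v : P v -> ele v (esup P).
Proof. intros H. exact (proj1 (esup_spec P (ex_intro _ v H)) v H). Qed.

Lemma esup_least (P : ereal -> Prop) u :
  (exists v, P v) -> (forall v, P v -> ele v u) -> ele (esup P) u.
Proof. intros H Hu. exact (proj2 (esup_spec P H) u Hu). Qed.

Section Einf.
Variable P : R -> Prop.
Hypothesis P_ge0 : forall t, P t -> 0 <= t.

Lemma einf_spec : is_einf P (einf P).
Proof.
  unfold einf. apply epsilon_spec.
  destruct (classic (exists t, P t)) as [Hne|Hne].
  - destruct (glb_exists P (ex_intro _ 0 P_ge0) Hne) as [l [Hlb Hgreatest]].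
    exists (Fin l). split.
    + intros t Ht. exact (Hlb _ Ht).
    + intros [b|] Hu; simpl.
      * apply Hgreatest. intros t Ht. exact (Hu _ Ht).
      * destruct Hne as [t Ht]. exact (Hu _ Ht).
  - exists PInf. split.
    + intros t Ht. exfalso; eauto.
    + intros [] _; exact I.
Qed.

Lemma einf_lt t : elt (einf P) (Fin t) -> exists t', P t' /\ t' < t.
Proof.
  intros Hlt. apply NNPP. intros Hn.
  assert (Hle : ele (Fin t) (einf P)).
  { apply (proj2 einf_spec). intros t' Ht'. simpl. apply Rnot_lt_le. eauto. }
  exact (elt_irrefl _ (ele_elt_trans _ _ _ Hle Hlt)).
Qed.

Lemma einf_le s : (forall t, s < t -> P t) -> ele (einf P) (Fin s).
Proof.
  intros Hs. destruct einf_spec as [Hlb _].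
  pose proof (Hlb (s + 1) (Hs (s + 1) ltac:(lra))) as Hfin.
  destruct (einf P) as [m|]; [|destruct Hfin]. simpl.
  apply Rnot_lt_le. intros Hc.
  specialize (Hlb ((m + s) / 2) (Hs ((m + s) / 2) ltac:(lra))). simpl in Hlb. lra.
Qed.

End Einf.

Lemma nat_above y : exists n : nat, y < INR n.
Proof.
  destruct (archimed y) as [H _].
  exists (Z.to_nat (up y)). destruct (Z_lt_le_dec 0 (up y)) as [Hpos|Hneg].
  - rewrite INR_IZR_INZ, Z2Nat.id by lia. exact H.
  - apply IZR_le in Hneg. pose proof (pos_INR (Z.to_nat (up y))). lra.
Qed.

Definition qr (n : nat) : R :=
  let (pm, k) := of_nat n in let (p, m) := of_nat pm in INR p / INR (S k) - INR m.

Lemma qr_dense x y : x < y -> exists n, x < qr n < y.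
Proof.
  intros Hxy.
  destruct (nat_above (1 / (y - x))) as [k Hk].
  destruct (nat_above (- x)) as [m Hm].
  assert (HSk : 0 < INR (S k)) by (apply lt_0_INR; lia).
  assert (Hwidth : 1 < (y - x) * INR (S k)).
  { rewrite S_INR. assert (1 / (y - x) * (y - x) = 1) by (field; lra). nra. }
  destruct (archimed ((x + INR m) * INR (S k))) as [Hup1 Hup2].
  assert (Hup0 : (0 < up ((x + INR m) * INR (S k)))%Z) by (apply lt_IZR; nra).
  set (j := Z.to_nat (up ((x + INR m) * INR (S k)))).
  assert (Hj : INR j = IZR (up ((x + INR m) * INR (S k)))).
  { unfold j. rewrite INR_IZR_INZ, Z2Nat.id by lia. reflexivity. }
  exists (to_nat (to_nat (j, m), k)).
  unfold qr. rewrite !cancel_of_to.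
  split; apply (Rplus_lt_reg_r (INR m)); unfold Rminus; rewrite Rplus_assoc, Rplus_opp_l, Rplus_0_r.
  - apply (Rmult_lt_reg_r (INR (S k))); auto. unfold Rdiv. rewrite Rmult_assoc, Rinv_l by lra. lra.
  - apply (Rmult_lt_reg_r (INR (S k))); auto. unfold Rdiv. rewrite Rmult_assoc, Rinv_l by lra. nra.
Qed.

Lemma borel_empty : borel (fun _ => False).
Proof. eapply borel_ext; [|apply (borel_interval 1 0)]. intros x; split; [lra|tauto]. Qed.

Lemma borel_union2 A B : borel A -> borel B -> borel (fun x => A x \/ B x).
Proof.
  intros HA HB.
  eapply borel_ext; [|apply (borel_union (fun n => match n with O => A | S _ => B end))].
  - intros x; split.
    + intros [[|n] Hn]; auto.
    + intros [H|H]; [exists O|exists 1%nat]; exact H.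
  - intros [|n]; auto.
Qed.

Lemma borel_inter2 A B : borel A -> borel B -> borel (fun x => A x /\ B x).
Proof.
  intros HA HB.
  eapply borel_ext; [|apply borel_compl, borel_union2; apply borel_compl; [exact HA|exact HB]].
  intros x; simpl. split; [intros H; split; apply NNPP; tauto|tauto].
Qed.

Lemma borel_if (P : Prop) A : borel A -> borel (fun x => P /\ A x).
Proof.
  intros HA. destruct (classic P) as [H|H].
  - eapply borel_ext; [|exact HA]. simpl; tauto.
  - eapply borel_ext; [|exact borel_empty]. simpl; tauto.
Qed.

Lemma borel_singleton l : borel (fun x => x = l).
Proof.
  eapply borel_ext; [|apply borel_compl, borel_union2;
    [apply (borel_union (fun n x => l - INR n < x < l))
    |apply (borel_union (fun n x => l < x < l + INR n))]; intros; apply borel_interval].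
  intros x; simpl. split.
  - intros H. destruct (Rtotal_order x l) as [Hl|[Hl|Hl]]; auto; exfalso; apply H.
    + left. destruct (nat_above (l - x)) as [n Hn]. exists n. lra.
    + right. destruct (nat_above (x - l)) as [n Hn]. exists n. lra.
  - intros -> [[n Hn]|[n Hn]]; lra.
Qed.

Lemma borel_convex (C : R -> Prop) :
  (forall x, C x -> 0 <= x <= 1) -> (forall a b x, C a -> C b -> a <= x <= b -> C x) -> borel C.
Proof.
  intros Hbd Hconv.
  destruct (classic (exists x, C x)) as [Hne|Hne].
  2:{ eapply borel_ext; [|exact borel_empty]. intros x; split; [tauto|eauto]. }
  destruct (completeness C) as [u [Hu Hleast]]; [exists 1; intros x Hx; apply Hbd, Hx|exact Hne|].
  destruct (glb_exists C) as [l [Hl Hgreatest]]; [exists 0; intros x Hx; apply Hbd, Hx|exact Hne|].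
  eapply borel_ext with (A := fun x => (l < x < u \/ (C l /\ x = l)) \/ (C u /\ x = u)).
  2:{ repeat apply borel_union2; try apply borel_interval; apply borel_if, borel_singleton. }
  intros x; split.
  - intros [[Hx|[H ->]]|[H ->]]; auto.
    assert (Ha : exists a, C a /\ a < x).
    { apply NNPP; intros Hn. enough (x <= l) by lra.
      apply Hgreatest. intros y Hy. apply Rnot_lt_le. intros Hc. eauto. }
    assert (Hb : exists b, C b /\ x < b).
    { apply NNPP; intros Hn. enough (u <= x) by lra.
      apply Hleast. intros y Hy. apply Rnot_lt_le. intros Hc. eauto. }
    destruct Ha as [a [Ha Hax]], Hb as [b [Hb Hxb]]. apply (Hconv a b); auto; lra.
  - intros Hx. specialize (Hl _ Hx). specialize (Hu _ Hx).
    destruct (Req_dec x l) as [->|]; [left; right; auto|].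
    destruct (Req_dec x u) as [->|]; [right; auto|]. left; left; lra.
Qed.

Lemma borel_open (O : R -> Prop) : Defs.open_set O -> borel O.
Proof.
  intros HO.
  eapply borel_ext with
    (A := fun x => exists i j, (forall y, qr i < y < qr j -> O y) /\ qr i < x < qr j).
  2:{ do 2 (apply borel_union; intros). apply borel_if, borel_interval. }
  intros x; split.
  - intros [i [j [Hsub Hx]]]. exact (Hsub x Hx).
  - intros Hx. destruct (HO x Hx) as [eps [Heps Hball]].
    destruct (qr_dense (x - eps) x) as [i Hi]; [lra|].
    destruct (qr_dense x (x + eps)) as [j Hj]; [lra|].
    exists i, j. split; [|lra]. intros y Hy. apply Hball, Rabs_def1; lra.
Qed.

Lemma open_set_opp (O : R -> Prop) : Defs.open_set O -> Defs.open_set (fun y => O (- y)).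
Proof.
  intros HO x Hx. destruct (HO _ Hx) as [eps [Heps Hball]].
  exists eps. split; auto. intros y Hy. apply Hball.
  replace (- y - - x) with (- (y - x)) by ring. rewrite Rabs_Ropp. exact Hy.
Qed.

Lemma open_right_end (O : R -> Prop) M x :
  Defs.open_set O -> (forall y, O y -> y < M) -> O x ->
  exists b, x < b /\ ~ O b /\ forall v, x <= v < b -> O v.
Proof.
  intros HO HM Hx.
  set (Reach := fun u => x <= u /\ forall v, x <= v <= u -> O v).
  destruct (HO x Hx) as [eps [Heps Hball]].
  assert (Hreach : Reach (x + eps / 2)).
  { split; [lra|]. intros v Hv. apply Hball, Rabs_def1; lra. }
  destruct (completeness Reach) as [b [Hub Hleast]].
  { exists M. intros u [Hu Hreach']. left. apply HM, Hreach'. lra. }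
  { exists (x + eps / 2). exact Hreach. }
  specialize (Hub _ Hreach) as Hxb.
  assert (Hin : forall v, x <= v < b -> O v).
  { intros v Hv. assert (Hbeyond : exists u, Reach u /\ v < u).
    { apply NNPP; intros Hn. enough (b <= v) by lra.
      apply Hleast. intros u Hu. apply Rnot_lt_le. intros Hc. eauto. }
    destruct Hbeyond as [u [[_ Hu] Hvu]]. apply Hu. lra. }
  exists b. split; [lra|]. split; [|exact Hin].
  intros Hb. destruct (HO b Hb) as [e [He Hball']].
  enough (Reach (b + e / 2)) by (specialize (Hub _ H); lra).
  split; [lra|]. intros v Hv. destruct (Rlt_dec v b).
  - apply Hin; lra.
  - apply Hball', Rabs_def1; lra.
Qed.

Lemma component_exists (O : R -> Prop) x :
  Defs.open_set O -> (forall y, O y -> 0 < y < 1) -> O x ->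
  exists a b, is_component O a b /\ a < x < b.
Proof.
  intros HO Hin Hx.
  destruct (open_right_end O 1 x HO (fun y Hy => proj2 (Hin y Hy)) Hx) as [b [Hxb [Hb Hright]]].
  destruct (open_right_end (fun y => O (- y)) 0 (- x) (open_set_opp O HO))
    as [a' [Hxa [Ha Hleft]]].
  { intros y Hy. specialize (Hin _ Hy). lra. }
  { rewrite Ropp_involutive. exact Hx. }
  exists (- a'), b. split; [|lra]. repeat split; auto; [lra|].
  intros v Hv. destruct (Rle_dec x v).
  - apply Hright. lra.
  - rewrite <- (Ropp_involutive v). apply Hleft. lra.
Qed.

Lemma component_bounds (O : R -> Prop) a b :
  (forall x, O x -> 0 < x < 1) -> is_component O a b -> 0 <= a /\ b <= 1.
Proof.
  intros Hin [Hab [Hc _]].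
  set (m := (a + b) / 2).
  assert (Hm := Hin m (Hc m ltac:(unfold m; lra))).
  split; apply Rnot_lt_le; intros Hlt.
  - specialize (Hin 0 (Hc 0 ltac:(unfold m in Hm; lra))). lra.
  - specialize (Hin 1 (Hc 1 ltac:(unfold m in Hm; lra))). lra.
Qed.

(** A key [(x, 0)] stands for the point [x] of [0,1]; the keys [(x, 1)] and
    [(x, -1)] stand for the added points sitting just right and just left of
    [x]; keys are ordered lexicographically. *)
Definition key : Type := (R * R)%type.

Definition kle (p q : key) : Prop := fst p < fst q \/ (fst p = fst q /\ snd p <= snd q).

Definition valid (p : key) : Prop := snd p = -1 \/ snd p = 0 \/ snd p = 1.

Definition between (p q : key) (r : R) : Prop :=
  (kle p (r, 0) /\ kle (r, 0) q) \/ (kle q (r, 0) /\ kle (r, 0) p).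

Definition dk (f : R -> ereal) (p q : key) : ereal :=
  if excluded_middle_informative (p = q) then Fin 0
  else esup (fun v => exists r, between p q r /\ v = f r).

Definition kopp (p : key) : key := (- fst p, - snd p).

Lemma kle_refl p : kle p p.
Proof. unfold kle; lra. Qed.

Lemma kle_trans p q r : kle p q -> kle q r -> kle p r.
Proof. unfold kle; lra. Qed.

Lemma kle_total p q : kle p q \/ kle q p.
Proof. unfold kle; lra. Qed.

Lemma kle_antisym p q : kle p q -> kle q p -> p = q.
Proof.
  destruct p as [a i], q as [b j]; unfold kle; simpl; intros.
  replace b with a by lra. replace j with i by lra. reflexivity.
Qed.

Lemma kle_real x y : kle (x, 0) (y, 0) <-> x <= y.
Proof. unfold kle; simpl; lra. Qed.

Lemma valid_real x : valid (x, 0).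
Proof. unfold valid; simpl; lra. Qed.

Lemma between_sym p q r : between p q r <-> between q p r.
Proof. unfold between; tauto. Qed.

Lemma between_split p q r x : between p r x -> between p q x \/ between q r x.
Proof. unfold between. destruct (kle_total q (x, 0)); tauto. Qed.

Lemma between_of_kle p q r : kle p q -> between p q r -> kle p (r, 0) /\ kle (r, 0) q.
Proof.
  intros Hpq [H|[Hq Hp]]; [exact H|].
  assert (p = q) by (apply kle_antisym; eauto using kle_trans). subst q.
  rewrite (kle_antisym _ _ Hp Hq). split; apply kle_refl.
Qed.

Lemma between_mono_r p q r x : kle p q -> kle q r -> between p q x -> between p r x.
Proof.
  intros Hpq Hqr Hx. destruct (between_of_kle _ _ _ Hpq Hx).
  left; eauto using kle_trans.
Qed.

Lemma between_nonempty p q : valid p -> valid q -> p <> q -> exists r, between p q r.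
Proof.
  assert (Hordered : forall p q, valid p -> valid q -> p <> q -> kle p q ->
            exists r, between p q r).
  { intros [a i] [b j] Hp Hq Hne Hpq. unfold valid, between, kle in *; simpl in *.
    destruct (Req_dec a b) as [<-|Hab].
    - exists a; simpl. assert (i <> j) by congruence. lra.
    - exists ((a + b) / 2); simpl. lra. }
  intros Hp Hq Hne. destruct (kle_total p q) as [H|H]; [eauto|].
  destruct (Hordered q p) as [r Hr]; auto. exists r. apply between_sym, Hr.
Qed.

Lemma between_endpoint p x : between p (x, 0) x.
Proof. unfold between. destruct (kle_total p (x, 0)); [left|right]; auto using kle_refl. Qed.

Lemma between_real x y r : between (x, 0) (y, 0) r <-> Rmin x y <= r <= Rmax x y.
Proof. unfold between, kle, Rmin, Rmax; simpl. destruct (Rle_dec x y); lra. Qed.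

Lemma between_side_base z i r : valid (z, i) -> between (z, i) (z, 0) r -> r = z.
Proof. unfold valid, between, kle; simpl; lra. Qed.

Lemma between_shrink y q q' r :
  fst y < q' < q \/ q < q' < fst y -> between y (q', 0) r -> between y (q, 0) r.
Proof. unfold between, kle; simpl; lra. Qed.

Lemma between_same_side z1 z2 i q :
  (i = 1 \/ i = -1) -> z1 <> z2 ->
  between (z1, i) (q, 0) z1 \/ between (z1, i) (q, 0) z2 \/
  between (z2, i) (q, 0) z1 \/ between (z2, i) (q, 0) z2.
Proof. unfold between, kle; simpl; lra. Qed.

Lemma kopp_involutive p : kopp (kopp p) = p.
Proof. destruct p; unfold kopp; simpl; rewrite !Ropp_involutive; reflexivity. Qed.

Lemma kopp_real x : kopp (x, 0) = (- x, 0).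
Proof. unfold kopp; simpl; rewrite Ropp_0; reflexivity. Qed.

Lemma kle_kopp p q : kle (kopp p) (kopp q) <-> kle q p.
Proof. unfold kle, kopp; simpl; lra. Qed.

Lemma valid_kopp p : valid p -> valid (kopp p).
Proof. unfold valid, kopp; simpl; lra. Qed.

Lemma between_kopp p q r : between (kopp p) (kopp q) r <-> between p q (- r).
Proof.
  assert (E : (r, 0) = kopp (- r, 0)) by (rewrite kopp_real, Ropp_involutive; reflexivity).
  unfold between. rewrite E, !kle_kopp. tauto.
Qed.

Lemma dk_kopp f p q : dk (fun r => f (- r)) (kopp p) (kopp q) = dk f p q.
Proof.
  unfold dk.
  destruct (excluded_middle_informative (kopp p = kopp q)) as [E|E];
    destruct (excluded_middle_informative (p = q)) as [E'|E']; auto.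
  - exfalso. apply E'. rewrite <- (kopp_involutive p), E. apply kopp_involutive.
  - subst. tauto.
  - f_equal. apply functional_extensionality; intro v. apply propositional_extensionality.
    split; intros [r [Hr ->]].
    + exists (- r). split; [apply between_kopp, Hr|reflexivity].
    + exists (- r). rewrite Ropp_involutive. split; [|reflexivity].
      apply between_kopp. rewrite Ropp_involutive. exact Hr.
Qed.

Section Distance.
Variable f : R -> ereal.
Hypothesis f_ge0 : forall r, ele (Fin 0) (f r).

Lemma dk_self p : dk f p p = Fin 0.
Proof. unfold dk. destruct (excluded_middle_informative (p = p)); congruence. Qed.

Lemma dk_sym p q : dk f p q = dk f q p.
Proof.
  unfold dk.
  destruct (excluded_middle_informative (p = q)), (excluded_middle_informative (q = p));
    subst; try congruence.
  f_equal. apply functional_extensionality; intro v. apply propositional_extensionality.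
  split; intros [r [Hr ->]]; exists r; split; auto; apply between_sym; auto.
Qed.

Lemma dk_ub p q r : p <> q -> between p q r -> ele (f r) (dk f p q).
Proof.
  intros Hne Hr. unfold dk. destruct (excluded_middle_informative (p = q)); [congruence|].
  apply esup_ub. eauto.
Qed.

Lemma dk_least p q u : valid p -> valid q -> ele (Fin 0) u ->
  (forall r, between p q r -> ele (f r) u) -> ele (dk f p q) u.
Proof.
  intros Hp Hq Hu H. unfold dk. destruct (excluded_middle_informative (p = q)) as [|Hne]; auto.
  apply esup_least.
  - destruct (between_nonempty p q Hp Hq Hne) as [r Hr]. eauto.
  - intros v [r [Hr ->]]. auto.
Qed.

Lemma dk_ge0 p q : valid p -> valid q -> ele (Fin 0) (dk f p q).
Proof.
  intros Hp Hq. destruct (excluded_middle_informative (p = q)) as [->|Hne].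
  - rewrite dk_self. apply ele_refl.
  - destruct (between_nonempty p q Hp Hq Hne) as [r Hr].
    eapply ele_trans; [apply f_ge0|]. apply dk_ub; eauto.
Qed.

Lemma dk_ultra p q r : valid p -> valid q -> valid r ->
  ele (dk f p r) (emax (dk f p q) (dk f q r)).
Proof.
  intros Hp Hq Hr.
  destruct (excluded_middle_informative (p = q)) as [->|Hpq]; [apply emax_ge_r|].
  destruct (excluded_middle_informative (q = r)) as [->|Hqr]; [apply emax_ge_l|].
  apply dk_least; auto.
  - eapply ele_trans; [apply (dk_ge0 p q); auto|apply emax_ge_l].
  - intros x Hx. destruct (between_split p q r x Hx) as [H|H].
    + eapply ele_trans; [apply (dk_ub p q); auto|apply emax_ge_l].
    + eapply ele_trans; [apply (dk_ub q r); auto|apply emax_ge_r].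
Qed.

Lemma dk_lt_trans p q r t : valid p -> valid q -> valid r ->
  elt (dk f p q) (Fin t) -> elt (dk f q r) (Fin t) -> elt (dk f p r) (Fin t).
Proof. intros. eapply ele_elt_trans; [apply (dk_ultra p q r); auto|]. apply emax_lt; auto. Qed.

Lemma dk_incl p q p' q' : valid p -> valid q -> valid p' -> valid q' -> p' <> q' ->
  (forall r, between p q r -> between p' q' r) -> ele (dk f p q) (dk f p' q').
Proof.
  intros Hp Hq Hp' Hq' Hne Hincl.
  apply dk_least; auto using dk_ge0. intros r Hr. apply dk_ub; auto.
Qed.

Lemma dk_mono_r p q r : valid p -> valid q -> valid r -> kle p q -> kle q r ->
  ele (dk f p q) (dk f p r).
Proof.
  intros Hp Hq Hr Hpq Hqr.
  destruct (excluded_middle_informative (p = q)) as [->|Hne].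
  - rewrite dk_self. apply dk_ge0; auto.
  - apply dk_incl; auto.
    + intros ->. apply Hne, kle_antisym; auto.
    + intros x. apply between_mono_r; auto.
Qed.

Lemma dk_convex c p q r t : valid c -> valid p -> valid q -> valid r ->
  kle p q -> kle q r -> elt (dk f c p) (Fin t) -> elt (dk f c r) (Fin t) ->
  elt (dk f c q) (Fin t).
Proof.
  intros Hc Hp Hq Hr Hpq Hqr Hcp Hcr.
  apply (dk_lt_trans c p q t); auto.
  eapply ele_elt_trans; [apply (dk_mono_r p q r); auto|].
  apply (dk_lt_trans p c r t); auto. rewrite dk_sym; auto.
Qed.

Lemma dk_side_base z i : valid (z, i) -> ele (dk f (z, i) (z, 0)) (f z).
Proof.
  intros Hv. apply dk_least; auto using valid_real.
  intros r Hr. rewrite (between_side_base z i r Hv Hr). apply ele_refl.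
Qed.

End Distance.

Definition cauchy_above {X : Type} (d : X -> X -> ereal) (x : nat -> X) (s : R) : Prop :=
  forall t, s < t -> exists N, forall m n, (N <= m)%nat -> (N <= n)%nat ->
    elt (d (x m) (x n)) (Fin t).

Definition eventually_within {X : Type} (d : X -> X -> ereal) (x : nat -> X) (t : R) (y : X) :
  Prop := exists N, forall n, (N <= n)%nat -> elt (d (x n) y) (Fin t).

Definition complete_above {X : Type} (d : X -> X -> ereal) : Prop :=
  forall x s, 0 <= s -> cauchy_above d x s ->
    exists y, forall t, s < t -> eventually_within d x t y.

Lemma eventually_within_mono {X : Type} (d : X -> X -> ereal) x t t' y :
  t <= t' -> eventually_within d x t y -> eventually_within d x t' y.
Proof.
  intros Htt [N HN]. exists N. intros n Hn.
  eapply elt_ele_trans; [apply HN; auto|]. exact Htt.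
Qed.

(** The added point [y = (z, ±1)] is a gap when [f z] exceeds the supremum of
    [f] over some one-sided neighbourhood [(z, q]] or [[q, z)] of [z] on the side
    of [y] (the side is forced: otherwise [z] itself lies between [y] and [(q, 0)]). *)
Definition gap (f : R -> ereal) (y : key) : Prop :=
  snd y <> 0 /\ exists q, elt (dk f y (q, 0)) (f (fst y)).

Lemma gap_kopp f y : gap (fun r => f (- r)) (kopp y) <-> gap f y.
Proof.
  unfold gap. simpl. rewrite Ropp_involutive.
  assert (Hq : forall q, dk (fun r => f (- r)) (kopp y) (q, 0) = dk f y (- q, 0)).
  { intros q. rewrite <- (Ropp_involutive q) at 1. rewrite <- kopp_real. apply dk_kopp. }
  split; intros [Hside [q Hgap]]; (split; [lra|]).
  - exists (- q). rewrite <- Hq. exact Hgap.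
  - exists (- q). rewrite Hq, Ropp_involutive. exact Hgap.
Qed.

Section KeyLimit.
Variable f : R -> ereal.
Hypothesis f_ge0 : forall r, ele (Fin 0) (f r).
Variable k : nat -> key.
Hypothesis k_valid : forall n, valid (k n).
Variable s : R.
Hypothesis s_ge0 : 0 <= s.
Hypothesis k_cauchy : cauchy_above (dk f) k s.

Lemma eventually_within_tail t : s < t ->
  exists N, forall n, (N <= n)%nat -> eventually_within (dk f) k t (k n).
Proof. intros Ht. destruct (k_cauchy t Ht) as [N HN]. exists N. intros n Hn. exists N. auto. Qed.

Lemma eventually_within_near t c c' : valid c -> valid c' ->
  eventually_within (dk f) k t c -> elt (dk f c c') (Fin t) -> eventually_within (dk f) k t c'.
Proof.
  intros Hc Hc' [N HN] H. exists N. intros n Hn. apply (dk_lt_trans f f_ge0 (k n) c c' t); auto.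
Qed.

Lemma eventually_within_dist t c c' : valid c -> valid c' ->
  eventually_within (dk f) k t c -> eventually_within (dk f) k t c' -> elt (dk f c c') (Fin t).
Proof.
  intros Hc Hc' [N HN] [M HM]. apply (dk_lt_trans f f_ge0 c (k (max N M)) c' t); auto.
  - rewrite dk_sym. apply HN; lia.
  - apply HM; lia.
Qed.

Lemma eventually_within_convex t c1 c c2 : valid c1 -> valid c -> valid c2 ->
  kle c1 c -> kle c c2 -> eventually_within (dk f) k t c1 -> eventually_within (dk f) k t c2 ->
  eventually_within (dk f) k t c.
Proof.
  intros H1 H H2 K1 K2 E1 E2. apply (eventually_within_near t c1 c); auto.
  eapply ele_elt_trans; [apply (dk_mono_r f f_ge0 c1 c c2); auto|].
  apply eventually_within_dist; auto.
Qed.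

Section LeftOf.
Variables (L t0 : R) (c : key).
Hypothesis t0_gt : s < t0.
Hypothesis approach_left : forall r t, r < L -> s < t ->
  exists n, eventually_within (dk f) k t (k n) /\ r < fst (k n).
Hypothesis not_to_L : ~ eventually_within (dk f) k t0 (L, 0).
Hypothesis c_valid : valid c.
Hypothesis c_near : eventually_within (dk f) k t0 c.
Hypothesis c_left : kle c (L, 0).

Lemma valid_left_point : valid (L, -1).
Proof. unfold valid; simpl; lra. Qed.

Lemma near_points_left_of t w : t <= t0 -> valid w -> eventually_within (dk f) k t w ->
  kle w (L, -1).
Proof.
  intros Htt Hw Hwt. destruct (classic (kle (L, 0) w)) as [HLw|HLw].
  - exfalso. apply not_to_L, (eventually_within_convex t0 c (L, 0) w); auto using valid_real.
    apply (eventually_within_mono _ _ t); auto.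
  - destruct w as [a i]; unfold valid, kle in *; simpl in *. lra.
Qed.

Lemma dist_left_point t w : s < t -> t <= t0 -> valid w -> eventually_within (dk f) k t w ->
  ele (dk f w (L, -1)) (Fin t).
Proof.
  intros Hst Htt Hw Hwt.
  apply dk_least; auto using valid_left_point. simpl; lra.
  intros r Hr.
  destruct (between_of_kle _ _ _ (near_points_left_of t w Htt Hw Hwt) Hr) as [Hwr HrL].
  assert (HrL' : r < L) by (unfold kle in HrL; simpl in HrL; lra).
  destruct (approach_left r t HrL' Hst) as [n [Hn Hrn]].
  assert (Hwn : w <> k n) by (intros ->; unfold kle in Hwr; simpl in Hwr; lra).
  apply elt_ele. eapply ele_elt_trans; [apply (dk_ub f w (k n)); auto|].
  - left. split; [exact Hwr|left; exact Hrn].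
  - apply eventually_within_dist; auto.
Qed.

Lemma converges_left_point t : s < t -> eventually_within (dk f) k t (L, -1).
Proof.
  intros Ht. set (t' := (s + Rmin t t0) / 2).
  assert (Hmin := Rmin_l t t0). assert (Hmin' := Rmin_r t t0).
  assert (Hs : s < Rmin t t0) by (apply Rmin_glb_lt; auto).
  destruct (eventually_within_tail t' ltac:(unfold t'; lra)) as [N HN].
  assert (HNt := HN N (le_n _)).
  apply (eventually_within_near t (k N)); auto using valid_left_point.
  - apply (eventually_within_mono _ _ t'); [unfold t'; lra|exact HNt].
  - eapply ele_elt_trans; [apply (dist_left_point t'); auto; unfold t'; lra|simpl; unfold t'; lra].
Qed.

(** [f L >= t0], for otherwise [(L, 0)], at distance at most [f L] from the limit
    [(L, -1)], would be approached at level [t0]; and the reals just left of [L]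
    lie within [t1 < t0] of [(L, -1)]. *)
Lemma left_point_gap : (forall n, k n <> (L, -1)) -> gap f (L, -1).
Proof.
  intros Hnot. split; [simpl; lra|].
  assert (HfL : ele (Fin t0) (f L)).
  { apply not_elt. intros Hlt.
    apply not_to_L, (eventually_within_near t0 (L, -1)); auto using valid_real, valid_left_point.
    - apply converges_left_point, t0_gt.
    - eapply ele_elt_trans; [apply dk_side_base; auto using valid_left_point|exact Hlt]. }
  set (t1 := (s + t0) / 2).
  destruct (eventually_within_tail t1 ltac:(unfold t1; lra)) as [N HN].
  assert (HNt := HN N (le_n _)).
  assert (HkN : fst (k N) < L).
  { destruct (near_points_left_of t1 (k N) ltac:(unfold t1; lra) (k_valid N) HNt) as [H|[H1 H2]];
      auto.
    exfalso. apply (Hnot N).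
    specialize (k_valid N). destruct (k N) as [a i]; unfold valid in *; simpl in *. f_equal; lra. }
  exists ((fst (k N) + L) / 2). simpl.
  eapply ele_elt_trans; [|eapply elt_ele_trans; [|exact HfL]].
  - apply (dk_incl f f_ge0 _ _ (k N) (L, -1)); auto using valid_real, valid_left_point.
    intros r. specialize (k_valid N). destruct (k N) as [a i].
    unfold valid, between, kle in *; simpl in *. lra.
  - eapply ele_elt_trans; [apply (dist_left_point t1); auto; unfold t1; lra|simpl; unfold t1; lra].
Qed.

Lemma limit_left_of :
  exists y, valid y /\ (forall t, s < t -> eventually_within (dk f) k t y) /\
    ((exists n, y = k n) \/ (y = (L, -1) /\ gap f y)).
Proof.
  exists (L, -1). split; [apply valid_left_point|]. split; [exact converges_left_point|].
  destruct (classic (exists n, k n = (L, -1))) as [[n Hn]|Hnot]; [left; eauto|right].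
  split; [reflexivity|]. apply left_point_gap. intros n Hn. eauto.
Qed.

End LeftOf.

End KeyLimit.

Lemma eventually_within_kopp f (k : nat -> key) t c :
  eventually_within (dk (fun r => f (- r))) (fun n => kopp (k n)) t (kopp c) <->
  eventually_within (dk f) k t c.
Proof. unfold eventually_within. split; intros [N HN]; exists N; intros n Hn;
  specialize (HN n Hn); rewrite dk_kopp in *; exact HN. Qed.

Lemma cauchy_above_kopp f (k : nat -> key) s :
  cauchy_above (dk f) k s -> cauchy_above (dk (fun r => f (- r))) (fun n => kopp (k n)) s.
Proof.
  intros Hk t Ht. destruct (Hk t Ht) as [N HN]. exists N. intros m n Hm Hn.
  rewrite dk_kopp. auto.
Qed.

Section KeyCompleteness.
Variable f : R -> ereal.
Hypothesis f_ge0 : forall r, ele (Fin 0) (f r).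
Variable k : nat -> key.
Hypothesis k_valid : forall n, valid (k n).
Variables lo hi : R.
Hypothesis k_bounded : forall n, lo <= fst (k n) <= hi.
Variable s : R.
Hypothesis s_ge0 : 0 <= s.
Hypothesis k_cauchy : cauchy_above (dk f) k s.

Lemma limit_right_of L t0 c : s < t0 ->
  (forall r t, L < r -> s < t -> exists n, eventually_within (dk f) k t (k n) /\ fst (k n) < r) ->
  ~ eventually_within (dk f) k t0 (L, 0) ->
  valid c -> eventually_within (dk f) k t0 c -> kle (L, 0) c ->
  exists y, valid y /\ (forall t, s < t -> eventually_within (dk f) k t y) /\
    ((exists n, y = k n) \/ (y = (L, 1) /\ gap f y)).
Proof.
  intros Ht0 Happroach HL Hc Hct0 HLc.
  destruct (limit_left_of (fun r => f (- r)) (fun r => f_ge0 (- r)) (fun n => kopp (k n))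
              (fun n => valid_kopp _ (k_valid n)) s s_ge0 (cauchy_above_kopp f k s k_cauchy)
              (- L) t0 (kopp c))
    as [y [Hy [Hlim Hcases]]]; auto using valid_kopp.
  - intros r t Hr Ht. destruct (Happroach (- r) t) as [n [Hn Hrn]]; [lra|auto|].
    exists n. split; [apply eventually_within_kopp, Hn|simpl; lra].
  - rewrite <- kopp_real, eventually_within_kopp. exact HL.
  - apply eventually_within_kopp. exact Hct0.
  - rewrite <- kopp_real. apply kle_kopp. exact HLc.
  - exists (kopp y). split; [apply valid_kopp, Hy|split].
    + intros t Ht. apply eventually_within_kopp. rewrite kopp_involutive. auto.
    + destruct Hcases as [[n ->]|[-> Hgap]].
      * left. exists n. apply kopp_involutive.
      * right. assert (E : kopp (- L, -1) = (L, 1))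
          by (unfold kopp; simpl; f_equal; lra).
        rewrite E. split; [reflexivity|]. apply gap_kopp. rewrite <- E, kopp_involutive. exact Hgap.
Qed.
Lemma near_terms t : s < t -> exists n, eventually_within (dk f) k t (k n).
Proof.
  intros Ht. destruct (eventually_within_tail f k s k_cauchy t Ht) as [N HN].
  exists N. apply HN. lia.
Qed.

Lemma approach_point : exists L, lo <= L <= hi /\
  (forall r t, L < r -> s < t -> exists n, eventually_within (dk f) k t (k n) /\ fst (k n) < r) /\
  (forall r t, r < L -> s < t -> exists n, eventually_within (dk f) k t (k n) /\ r < fst (k n)).
Proof.
  set (Below := fun r => exists t, s < t /\
                  forall n, eventually_within (dk f) k t (k n) -> r <= fst (k n)).
  assert (Hlo : Below lo) by (exists (s + 1); split; [lra|intros n _; apply k_bounded]).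
  destruct (completeness Below) as [L [HLub HLleast]]; [|exists lo; exact Hlo|].
  { exists hi. intros r [t [Ht Hr]]. destruct (near_terms t Ht) as [n Hn].
    specialize (Hr n Hn). specialize (k_bounded n). lra. }
  exists L. split; [split|split].
  - exact (HLub _ Hlo).
  - apply HLleast. intros r [t [Ht Hr]]. destruct (near_terms t Ht) as [n Hn].
    specialize (Hr n Hn). specialize (k_bounded n). lra.
  - intros r t Hr Ht. apply NNPP. intros Hn.
    enough (Below r) by (specialize (HLub _ H); lra).
    exists t. split; auto. intros n Hnt. apply Rnot_lt_le. eauto.
  - intros r t Hr Ht.
    assert (Hr' : exists r', Below r' /\ r < r').
    { apply NNPP. intros Hn. enough (L <= r) by lra.
      apply HLleast. intros x Hx. apply Rnot_lt_le. eauto. }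
    destruct Hr' as [r' [[t' [Ht' Hbelow]] Hrr']].
    destruct (near_terms (Rmin t t') (Rmin_glb_lt _ _ _ Ht Ht')) as [n Hn].
    exists n. split.
    + apply (eventually_within_mono _ _ (Rmin t t')); [apply Rmin_l|exact Hn].
    + enough (r' <= fst (k n)) by lra. apply Hbelow.
      apply (eventually_within_mono _ _ (Rmin t t')); [apply Rmin_r|exact Hn].
Qed.

Theorem cauchy_keys_converge :
  exists y, valid y /\ (forall t, s < t -> eventually_within (dk f) k t y) /\
    ((lo <= fst y <= hi /\ snd y = 0) \/ (exists n, y = k n) \/
     (lo <= fst y <= hi /\ gap f y)).
Proof.
  destruct approach_point as [L [HL [Hfrom_right Hfrom_left]]].
  destruct (classic (forall t, s < t -> eventually_within (dk f) k t (L, 0))) as [Hreal|Hnot].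
  { exists (L, 0). split; [apply valid_real|]. split; [exact Hreal|]. left. simpl; auto. }
  apply not_all_ex_not in Hnot. destruct Hnot as [t0 Hnot].
  apply imply_to_and in Hnot. destruct Hnot as [Ht0 Hnot].
  destruct (near_terms t0 Ht0) as [n0 Hn0].
  destruct (kle_total (k n0) (L, 0)) as [Hside|Hside].
  - destruct (limit_left_of f f_ge0 k k_valid s s_ge0 k_cauchy L t0 (k n0))
      as [y [Hy [Hlim [Hseq|[-> Hgap]]]]]; auto.
    + exists y. do 2 (split; auto).
    + exists (L, -1). do 2 (split; auto).
  - destruct (limit_right_of L t0 (k n0)) as [y [Hy [Hlim [Hseq|[-> Hgap]]]]]; auto.
    + exists y. do 2 (split; auto).
    + exists (L, 1). do 2 (split; auto).
Qed.

End KeyCompleteness.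

Lemma elt_dense d e : elt (Fin d) e -> exists n, d < qr n /\ elt (Fin (qr n)) e.
Proof.
  destruct e as [v|]; simpl; intros Hd.
  - destruct (qr_dense d v Hd) as [n Hn]. exists n. simpl. lra.
  - destruct (qr_dense d (d + 1)) as [n Hn]; [lra|]. exists n. simpl. split; [lra|exact I].
Qed.

(** A rational code [(a, q)] of a gap point: [qr a] separates the value of [f]
    at its base from the supremum of [f] between the point and [qr q]. Distinct
    gap points on the same side have distinct codes, so they are countably many. *)
Definition gap_code (f : R -> ereal) (y : key) (w : nat * nat) : Prop :=
  elt (dk f y (qr (snd w), 0)) (Fin (qr (fst w))) /\ elt (Fin (qr (fst w))) (f (fst y)).

Section GapCode.
Variable f : R -> ereal.
Hypothesis f_ge0 : forall r, ele (Fin 0) (f r).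

Lemma gap_code_exists y : valid y -> gap f y -> exists w, gap_code f y w.
Proof.
  intros Hy [Hside [q0 Hq0]].
  assert (Hyq : forall q, y <> (q, 0)) by (intros q ->; apply Hside; reflexivity).
  assert (Hq0y : fst y <> q0).
  { intros E. rewrite <- E in Hq0. apply (elt_irrefl (f (fst y))).
    eapply ele_elt_trans; [|exact Hq0]. apply dk_ub; [apply Hyq|apply between_endpoint]. }
  destruct (qr_dense (Rmin (fst y) q0) (Rmax (fst y) q0)) as [q Hq].
  { unfold Rmin, Rmax. destruct (Rle_dec (fst y) q0); lra. }
  assert (Hshrink : ele (dk f y (qr q, 0)) (dk f y (q0, 0))).
  { apply dk_incl; auto using valid_real. intros r. apply between_shrink.
    unfold Rmin, Rmax in Hq. destruct (Rle_dec (fst y) q0); lra. }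
  destruct (dk f y (q0, 0)) as [d|]; [|destruct Hq0].
  destruct (elt_dense d (f (fst y)) Hq0) as [a [Hda Ha]].
  exists (a, q). split; simpl; [|exact Ha].
  eapply ele_elt_trans; [exact Hshrink|exact Hda].
Qed.

Lemma gap_code_excludes y w r : snd y <> 0 -> gap_code f y w ->
  elt (Fin (qr (fst w))) (f r) -> ~ between y (qr (snd w), 0) r.
Proof.
  intros Hside [Hdk _] Hr Hbetween. apply (elt_irrefl (f r)).
  eapply ele_elt_trans; [|eapply elt_ele_trans; [exact Hdk|apply elt_ele, Hr]].
  apply dk_ub; [intros ->; apply Hside; reflexivity|exact Hbetween].
Qed.

Lemma gap_code_unique y1 y2 w : snd y1 = snd y2 -> (snd y1 = 1 \/ snd y1 = -1) ->
  gap_code f y1 w -> gap_code f y2 w -> y1 = y2.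
Proof.
  destruct y1 as [z1 i], y2 as [z2 j]; simpl. intros <- Hi H1 H2.
  destruct (Req_dec z1 z2) as [<-|Hz]; [reflexivity|exfalso].
  assert (Hside : i <> 0) by lra.
  destruct (between_same_side z1 z2 i (qr (snd w)) Hi Hz) as [H|[H|[H|H]]];
    revert H; apply gap_code_excludes; auto; first [apply H1|apply H2].
Qed.

End GapCode.

Definition added_points (f : R -> ereal) : Type :=
  {y : key | valid y /\ 0 <= fst y <= 1 /\ gap f y}.

Definition pos {f : R -> ereal} (x : U (added_points f)) : key :=
  match x with
  | inl a => (proj1_sig a, 0)
  | inr u => proj1_sig u
  end.

Definition dbar (f : R -> ereal) (x y : U (added_points f)) : ereal := dk f (pos x) (pos y).

Definition added_code {f : R -> ereal} (u : added_points f) : nat :=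
  to_nat (if Req_EM_T (snd (proj1_sig u)) 1 then 1%nat else 0%nat,
          to_nat (epsilon (inhabits (0, 0)%nat) (gap_code f (proj1_sig u)))).

Lemma pos_valid f (x : U (added_points f)) : valid (pos x).
Proof. destruct x as [a|[y Hy]]; [apply valid_real|apply Hy]. Qed.

Lemma pos_bounded f (x : U (added_points f)) : 0 <= fst (pos x) <= 1.
Proof. destruct x as [[a Ha]|[y Hy]]; [exact Ha|apply Hy]. Qed.

Lemma added_code_inj f : (forall r, ele (Fin 0) (f r)) ->
  forall u v : added_points f, added_code u = added_code v -> u = v.
Proof.
  intros f_ge0 [y [Hy [Hyb Hyg]]] [z [Hz [Hzb Hzg]]]. unfold added_code; cbn [proj1_sig].
  intros H. apply to_nat_inj in H. injection H as Hside Hcode. apply to_nat_inj in Hcode.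
  assert (Hy1 : snd y = 1 \/ snd y = -1) by (destruct Hyg; unfold valid in Hy; lra).
  assert (Hz1 : snd z = 1 \/ snd z = -1) by (destruct Hzg; unfold valid in Hz; lra).
  assert (Hsnd : snd y = snd z).
  { destruct (Req_EM_T (snd y) 1), (Req_EM_T (snd z) 1); try discriminate; lra. }
  assert (E : y = z).
  { apply (gap_code_unique f y z (epsilon (inhabits (0, 0)%nat) (gap_code f y)));
      auto; [|rewrite Hcode]; apply epsilon_spec, gap_code_exists; auto. }
  subst z. f_equal. apply proof_irrelevance.
Qed.

Section AddedPoints.
Variable f : R -> ereal.
Hypothesis f_ge0 : forall r, ele (Fin 0) (f r).

Lemma dbar_pseudo_ultrametric : pseudo_ultrametric (dbar f).
Proof.
  unfold dbar. split; [|split; [|split]]; intros.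
  - apply dk_self.
  - apply dk_sym.
  - apply dk_ge0; auto using pos_valid.
  - apply dk_ultra; auto using pos_valid.
Qed.

Lemma dbar_complete_above : complete_above (dbar f).
Proof.
  intros x s Hs Hx.
  destruct (cauchy_keys_converge f f_ge0 (fun n => pos (x n)) (fun n => pos_valid f (x n))
              0 1 (fun n => pos_bounded f (x n)) s Hs Hx)
    as [y [Hy [Hlim [[Hyb Hsnd]|[[n ->]|[Hyb Hgap]]]]]].
  - destruct y as [a i]. simpl in Hyb, Hsnd. subst i.
    exists (inl (exist _ a Hyb)). exact Hlim.
  - exists (x n). exact Hlim.
  - exists (inr (exist _ y (conj Hy (conj Hyb Hgap)))). exact Hlim.
Qed.

End AddedPoints.

Lemma dI_dk I x y : dI I x y = dk (fI I) (x, 0) (y, 0).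
Proof.
  unfold dI, dk.
  destruct (Req_EM_T x y) as [<-|Hxy]; destruct excluded_middle_informative as [E|E]; auto.
  - exfalso. apply E. reflexivity.
  - exfalso. injection E. exact Hxy.
  - f_equal. apply functional_extensionality; intro v. apply propositional_extensionality.
    split; intros [r [Hr ->]]; exists r; split; auto; apply between_real; auto.
Qed.

Lemma fI_ge0 I x : ele (Fin 0) (fI I x).
Proof. apply (proj2 (einf_spec _ (fun t H => proj1 H))). intros t [Ht _]. exact Ht. Qed.

Lemma fI_zero I x : I 0 x -> ele (fI I x) (Fin 0).
Proof. intros H. apply (proj1 (einf_spec _ (fun t H => proj1 H))). split; [lra|exact H]. Qed.

Lemma in_scrI_ball I f c t : (forall r, ele (Fin 0) (f r)) ->
  Defs.open_set (I 0) -> (forall x, I 0 x -> 0 < x < 1) -> (forall r, I 0 r -> ele (f r) (Fin 0)) ->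
  valid c -> in_scrI I (fun r => 0 <= r <= 1 /\ elt (dk f c (r, 0)) (Fin t)).
Proof.
  intros f_ge0 HO Hin Hzero Hc.
  set (B := fun r => 0 <= r <= 1 /\ elt (dk f c (r, 0)) (Fin t)).
  assert (Hconv : forall a b x, B a -> B b -> a <= x <= b -> B x).
  { intros a b x [Ha Hca] [Hb Hcb] Hx. split; [lra|].
    apply (dk_convex f f_ge0 c (a, 0) (x, 0) (b, 0)); auto using valid_real; apply kle_real; lra. }
  assert (Hcomp : forall a b x y, is_component (I 0) a b -> a < x < b -> a < y < b -> B x -> B y).
  { intros a b x y Hab Hx Hy [_ Hcx].
    destruct (component_bounds _ a b Hin Hab) as [Ha Hb]. split; [lra|].
    assert (Hxy : ele (dk f (x, 0) (y, 0)) (Fin 0)).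
    { apply dk_least; auto using valid_real, ele_refl.
      intros r Hr. apply Hzero. destruct Hab as [_ [Hab _]]. apply Hab.
      apply between_real in Hr. unfold Rmin, Rmax in Hr. destruct (Rle_dec x y); lra. }
    apply (dk_lt_trans f f_ge0 c (x, 0) (y, 0) t); auto using valid_real.
    eapply ele_elt_trans; [exact Hxy|].
    exact (ele_elt_trans _ _ _ (dk_ge0 f f_ge0 c (x, 0) Hc (valid_real x)) Hcx). }
  exists (fun r => B r /\ ~ I 0 r), (fun a b => is_component (I 0) a b /\ B ((a + b) / 2)).
  split; [|split; [|split]].
  - apply borel_inter2; [apply borel_convex; [intros x [Hx _]; exact Hx|exact Hconv]|].
    apply borel_compl, borel_open, HO.
  - intros x [[Hx _] Hn]. auto.
  - intros a b [H _]. exact H.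
  - intros x. split.
    + intros HB. destruct (classic (I 0 x)) as [Hi|Hi]; [right|left; auto].
      destruct (component_exists (I 0) x HO Hin Hi) as [a [b [Hab Hx]]].
      exists a, b. split; [split; [exact Hab|]|exact Hx].
      apply (Hcomp a b x); auto. destruct Hab; lra.
    + intros [[HB _]|[a [b [[Hab HBm] Hx]]]]; [exact HB|].
      apply (Hcomp a b ((a + b) / 2)); auto. destruct Hab; lra.
Qed.

Lemma mu_pos_mono {F : Type} (S1 S2 : U F -> Prop) :
  (forall z, S1 z -> S2 z) -> mu_pos S1 -> mu_pos S2.
Proof.
  intros Hincl H1 H2. apply H1. intros eps Heps.
  destruct (H2 eps Heps) as [a [b [Hab [Hcover Hsum]]]]. exists a, b. split; [exact Hab|].
  split; [|exact Hsum]. intros x [h Hx]. apply Hcover. exists h. auto.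
Qed.

Lemma dT_lt_heights {X : Type} (d : X -> X -> ereal) p q e :
  elt (dT d p q) (Fin e) -> Rabs (snd q - snd p) < 2 * e.
Proof. intros H. pose proof (ele_elt_trans _ _ _ (emax_ge_r _ _) H) as Hh. simpl in Hh. lra. Qed.

Lemma dT_lt_positions {X : Type} (d : X -> X -> ereal) p q e :
  elt (dT d p q) (Fin e) -> elt (d (fst p) (fst q)) (Fin (e + (snd p + snd q) / 2)).
Proof.
  intros H. pose proof (ele_elt_trans _ _ _ (emax_ge_l _ _) H) as Hd.
  destruct (d (fst p) (fst q)); simpl in *; [lra|exact Hd].
Qed.

Section Backbone.
Variable F : Type.
Variable d : U F -> U F -> ereal.
Hypothesis d_pum : pseudo_ultrametric d.
Variable p : nat -> U F * R.
Hypothesis p_backbone : forall n, in_backbone d (p n).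
Hypothesis p_cauchy : forall eps, 0 < eps -> exists N, forall m n, (N <= m)%nat -> (N <= n)%nat ->
  elt (dT d (p m) (p n)) (Fin eps).

Lemma backbone_heights_converge : exists s, 0 <= s /\ Un_cv (fun n => snd (p n)) s.
Proof.
  destruct (R_complete (fun n => snd (p n))) as [s Hs].
  { intros eps Heps. destruct (p_cauchy (eps / 2) ltac:(lra)) as [N HN]. exists N.
    intros n m Hn Hm. unfold R_dist. apply (dT_lt_heights d (p m) (p n)) in HN; auto. lra. }
  exists s. split; [|exact Hs].
  apply Rnot_lt_le. intros Hneg. destruct (Hs (- s) ltac:(lra)) as [N HN].
  specialize (HN N (le_n _)). unfold R_dist in HN. apply Rabs_def2 in HN.
  destruct (p_backbone N). lra.
Qed.

Variable s : R.
Hypothesis p_heights : Un_cv (fun n => snd (p n)) s.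

Lemma backbone_positions_cauchy_above : cauchy_above d (fun n => fst (p n)) s.
Proof.
  intros t Ht. set (e := (t - s) / 3).
  destruct (p_cauchy e ltac:(unfold e; lra)) as [N1 HN1].
  destruct (p_heights e ltac:(unfold e; lra)) as [N2 HN2].
  exists (max N1 N2). intros m n Hm Hn.
  pose proof (dT_lt_positions d _ _ _ (HN1 m n ltac:(lia) ltac:(lia))) as Hmn.
  pose proof (HN2 m ltac:(lia)) as Hm2. pose proof (HN2 n ltac:(lia)) as Hn2.
  unfold R_dist in Hm2, Hn2. apply Rabs_def2 in Hm2. apply Rabs_def2 in Hn2.
  eapply elt_ele_trans; [exact Hmn|]. simpl. unfold e in *. lra.
Qed.

Variable y : U F.
Hypothesis p_limit : forall t, s < t -> eventually_within d (fun n => fst (p n)) t y.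

Lemma backbone_limit_in_backbone : 0 <= s -> in_backbone d (y, s).
Proof.
  destruct d_pum as [_ [d_sym [_ d_ultra]]].
  intros Hs. split; [exact Hs|]. simpl. apply einf_le; [intros t [Ht _]; exact Ht|].
  intros t Ht. split; [lra|].
  destruct (p_limit t Ht) as [N1 HN1].
  destruct (p_heights (t - s) ltac:(lra)) as [N2 HN2].
  set (n := max N1 N2).
  assert (Hyn := HN1 n ltac:(unfold n; lia)).
  assert (Hh := HN2 n ltac:(unfold n; lia)). unfold R_dist in Hh. apply Rabs_def2 in Hh.
  destruct (p_backbone n) as [_ Hfbb].
  destruct (einf_lt (fun t' => 0 <= t' /\ mu_pos (ball d (fst (p n)) t')) (fun _ H => proj1 H) t)
    as [t' [[_ Hmu] Ht't]].
  { eapply ele_elt_trans; [exact Hfbb|]. simpl. lra. }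
  refine (mu_pos_mono _ _ _ Hmu). intros z Hz. unfold ball in *.
  eapply ele_elt_trans; [apply (d_ultra y (fst (p n)) z)|]. apply emax_lt.
  - rewrite d_sym. exact Hyn.
  - eapply elt_ele_trans; [exact Hz|]. simpl. lra.
Qed.

Lemma backbone_converges eps : 0 < eps ->
  exists N, forall n, (N <= n)%nat -> elt (dT d (p n) (y, s)) (Fin eps).
Proof.
  intros Heps.
  destruct (p_limit (s + eps / 2) ltac:(lra)) as [N1 HN1].
  destruct (p_heights (eps / 2) ltac:(lra)) as [N2 HN2].
  exists (max N1 N2). intros n Hn.
  assert (Hyn := HN1 n ltac:(lia)).
  assert (Hh := HN2 n ltac:(lia)). unfold R_dist in Hh. apply Rabs_def2 in Hh.
  unfold dT. apply emax_lt; simpl.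
  - destruct (d (fst (p n)) y); simpl in *; [lra|exact Hyn].
  - rewrite Rabs_minus_sym. assert (Rabs (snd (p n) - s) < eps / 2)
      by (apply Rabs_def1; lra). lra.
Qed.

End Backbone.

Theorem backbone_complete_of_complete_above {F : Type} (d : U F -> U F -> ereal) :
  pseudo_ultrametric d -> complete_above d -> backbone_complete d.
Proof.
  intros d_pum d_complete p p_backbone p_cauchy.
  destruct (backbone_heights_converge F d p p_backbone p_cauchy) as [s [Hs Hheights]].
  destruct (d_complete (fun n => fst (p n)) s Hs
              (backbone_positions_cauchy_above F d p p_cauchy s Hheights)) as [y Hy].
  exists (y, s). split.
  - apply (backbone_limit_in_backbone F d d_pum p p_backbone s Hheights y Hy Hs).
  - apply (backbone_converges F d p s Hheights y Hy).
Qed.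

Lemma in_scrI_ext I (S S' : R -> Prop) : (forall r, S r <-> S' r) -> in_scrI I S -> in_scrI I S'.
Proof.
  intros Heq [A [M [HA [HA01 [HM HS]]]]]. exists A, M. do 3 (split; auto).
  intros x. rewrite <- Heq. apply HS.
Qed.

Lemma trace01_ball_dbar f (x : U (added_points f)) t r :
  trace01 (ball (dbar f) x t) r <-> 0 <= r <= 1 /\ elt (dk f (pos x) (r, 0)) (Fin t).
Proof. split; intros [h H]; [split|exists h]; auto. Qed.

Theorem mainTheorem17 (I : R -> R -> Prop) :
  nested_interval_partition I ->
  exists (F : Type) (enc : F -> nat),
    (forall u v, enc u = enc v -> u = v) /\
    exists dbar : U F -> U F -> ereal,
      pseudo_ultrametric dbar /\
      (forall x y : unit01, dbar (inl x) (inl y) = dI I (proj1_sig x) (proj1_sig y)) /\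
      (forall (x : U F) (t : R), in_scrI I (trace01 (ball dbar x t))) /\
      backbone_complete dbar.
Proof.
  intros [HI0 _]. destruct (HI0 0 (Rle_refl 0)) as [HO Hin].
  pose proof (fI_ge0 I) as f_ge0.
  exists (added_points (fI I)), added_code. split; [exact (added_code_inj _ f_ge0)|].
  exists (dbar (fI I)). split; [|split; [|split]].
  - exact (dbar_pseudo_ultrametric _ f_ge0).
  - intros x y. symmetry. apply dI_dk.
  - intros x t. eapply in_scrI_ext; [intros r; symmetry; apply trace01_ball_dbar|].
    apply in_scrI_ball; auto using pos_valid, fI_zero.
  - apply backbone_complete_of_complete_above.
    + exact (dbar_pseudo_ultrametric _ f_ge0).
    + exact (dbar_complete_above _ f_ge0).
Qed.
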